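(* Let $V = V_1 \oplus V_2$ be a finite-dimensional complex vector space, $T = \mathrm{Sym}(V^* )$, $T_i = \mathrm{Sym}(V_i^* ) \subset T$. Let $d \ge 2$, $F_i \in S^d V_i$ for $i=1,2$, and $F = F_1 + F_2 \in S^d V$. Let $l_i \in V_i^*$ with $l_i \notin F_i^\perp$ (the perp ideal of $F_i$ in $T_i$) for $i = 1,2$. Then <ol> <li>$F^\perp + (l_1 + l_2) \subsetneq \big[F_1^\perp + (l_1) + (V_2^* )\big] \cap \big[F_2^\perp + (l_2) + (V_1^* )\big]$ as ideals of $T$;</li> <li>$\dim_{\mathbb{C}} T/(F^\perp + (l_1+l_2)) \ge \dim_{\mathbb{C}} T_1/(F_1^\perp + (l_1)) + \dim_{\mathbb{C}} T_2/(F_2^\perp + (l_2))$.</li> </ol>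
   Context: For a complex vector space $W$, $\mathrm{Sym}(W^* )$ acts on $\mathrm{Sym}(W)$ by differentiation. For $G \in S^d W$, the perp ideal is $G^\perp = \{ g \in \mathrm{Sym}(W^* ) : g \cdot G = 0 \}$. $F^\perp$ denotes the perp ideal of $F$ in $T$; $(V_j^* )$ denotes the ideal of $T$ generated by $V_j^*$, and ideals of $T_i$ are regarded in $T$ via $T_i \subset T$ (generating ideals there). *)

From HB Require Import structures.
From mathcomp Require Import all_boot all_order all_algebra.
From mathcomp Require Import reals.
From mathcomp Require Import complex.
From mathcomp Require Import mpoly.

Set Implicit Arguments.
Unset Strict Implicit.
Unset Printing Implicit Defensive.

Import Order.TTheory GRing.Theory Num.Theory.
Local Open Scope ring_scope.

(* Coordinates: V = K^(n1+n2), V1 = first n1 coordinates, V2 = last n2.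
   Both Sym(V) and T = Sym(V^* ) are modelled as {mpoly K[n1+n2]};
   T acts on Sym(V) by differentiation (apolarity). *)

Section Apolarity.
Variables (K : fieldType) (n : nat).
Local Notation P := {mpoly K[n]}.

Definition apolar (g G : P) : P :=
  \sum_(m <- msupp g) g@_m *: G^`M[m].

Definition supported_on (B : pred 'I_n) (p : P) : bool :=
  all (fun m : 'X_{1..n} => [forall i, ~~ B i ==> (m i == 0%N)]) (msupp p).

Definition ideal_in (R S : P -> Prop) : P -> Prop :=
  fun p => exists s : seq (P * P),
    (forall x, x \in s -> R x.1 /\ S x.2) /\ p = \sum_(x <- s) x.1 * x.2.

Definition ideal_add (I J : P -> Prop) : P -> Prop := fun p => I p \/ J p.

Definition perp_in (R : P -> Prop) (G : P) : P -> Prop :=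
  fun g => R g /\ apolar g G = 0.

(* linear forms in the variables indexed by B, i.e. elements of V_B^* *)
Definition lin_forms_on (B : pred 'I_n) : P -> Prop :=
  fun p => p \is 1.-homog /\ supported_on B p.

(* dim_K (R / I) >= k : there are k elements of R linearly independent modulo I *)
Definition codim_ge (R I : P -> Prop) (k : nat) : Prop :=
  exists s : seq P, size s = k /\ (forall x, x \in s -> R x) /\
    forall c : seq K, size c = k ->
      I (\sum_(j < k) c`_j *: s`_j) -> forall j, c`_j = 0.

End Apolarity.

Definition blk1 (n1 n2 : nat) : pred 'I_(n1 + n2) := fun i => (i < n1)%N.
Definition blk2 (n1 n2 : nat) : pred 'I_(n1 + n2) := fun i => (n1 <= i)%N.
Arguments blk1 : clear implicits.
Arguments blk2 : clear implicits.

From HB Require Import structures.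
From mathcomp Require Import all_boot all_order all_algebra.
From mathcomp Require Import reals complex mpoly.
Import GRing.Theory Num.Theory.

Set Implicit Arguments.
Unset Strict Implicit.
Unset Printing Implicit Defensive.

Local Open Scope ring_scope.

(* Write F = F1 + F2 and K_i = F_i^perp + (l_i) + (V_j^* ).  If g . F = 0, then
   g . F1 = - g . F2 is a polynomial both on V1 and on V2, hence a constant c.
   Pick h in T1 (a monomial of l1 . F1) with (l1 h) . F1 = c1 a nonzero
   constant; removing from g its part in (V2^* ) and (c / c1) l1 h leaves an
   element of F1^perp in T1.  So F^perp + (l1 + l2) lies in K1, and likewise in
   K2.  The projection T -> T1 killing V2^* maps K1 into F1^perp + (l1), which
   is therefore K1 /\ T1.  The inclusion is strict: for h = h1 - c h2, the map
   p |-> (p h) . F vanishes on F^perp + (l1 + l2) but not at l1, which lies in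
   K1 /\ K2.  For the dimensions, a basis of T2/(F2^perp + (l2)) is made
   constant-free by dropping one vector; with a basis of T1/(F1^perp + (l1))
   and with l1 it stays independent modulo F^perp + (l1 + l2). *)

Section Apolarity.
Variables (K : fieldType) (n : nat).
Local Notation P := {mpoly K[n]}.
Implicit Types (g h G H : P).

Lemma apolar_seqE g G (s : seq 'X_{1..n}) : uniq s -> {subset msupp g <= s} ->
  apolar g G = \sum_(m <- s) g@_m *: G^`M[m].
Proof.
move=> s_uniq gs; rewrite [RHS](bigID (mem (msupp g))) /= [X in _ + X]big1; last first.
  by move=> m /memN_msupp_eq0 ->; rewrite scale0r.
rewrite addr0 -big_filter; apply/perm_big/uniq_perm; rewrite ?filter_uniq ?msupp_uniq //.
by move=> m; rewrite mem_filter andb_idr //; apply: gs.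
Qed.

Lemma apolarDl g h G : apolar (g + h) G = apolar g G + apolar h G.
Proof.
pose s := undup (msupp g ++ msupp h ++ msupp (g + h)).
rewrite !(@apolar_seqE _ _ s) ?undup_uniq //;
  try by move=> m ms; rewrite mem_undup !mem_cat ms ?orbT.
by rewrite -big_split; apply: eq_bigr => m _; rewrite mcoeffD scalerDl.
Qed.

Lemma apolarZl c g G : apolar (c *: g) G = c *: apolar g G.
Proof.
rewrite (@apolar_seqE _ _ (msupp g)) ?msupp_uniq //; last exact: msuppZ_le.
by rewrite /apolar scaler_sumr; apply: eq_bigr => m _; rewrite mcoeffZ scalerA.
Qed.

Lemma apolar0l G : apolar 0 G = 0.
Proof. by rewrite /apolar msupp0 big_nil. Qed.

Lemma apolarNl g G : apolar (- g) G = - apolar g G.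
Proof. by rewrite -scaleN1r apolarZl scaleN1r. Qed.

Lemma apolarBl g h G : apolar (g - h) G = apolar g G - apolar h G.
Proof. by rewrite apolarDl apolarNl. Qed.

Lemma apolar_suml (I : Type) (r : seq I) (F : I -> P) G :
  apolar (\sum_(i <- r) F i) G = \sum_(i <- r) apolar (F i) G.
Proof. by elim: r => [|x r IHr]; rewrite !(big_nil, big_cons) ?apolar0l ?apolarDl ?IHr. Qed.

Lemma apolarXl m G : apolar 'X_[m] G = G^`M[m].
Proof. by rewrite /apolar msuppX big_seq1 mcoeffX eqxx scale1r. Qed.

Lemma apolarDr g G H : apolar g (G + H) = apolar g G + apolar g H.
Proof. by rewrite -big_split; apply: eq_bigr => m _; rewrite mderivmD scalerDr. Qed.

Lemma apolar0r g : apolar g 0 = 0.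
Proof. by rewrite /apolar big1 // => m _; rewrite raddf0 scaler0. Qed.

Lemma apolarXM m h G : apolar ('X_[m] * h) G = (apolar h G)^`M[m].
Proof.
elim/mpolyind: h => [|c m' p _ _ IHp]; first by rewrite mulr0 !apolar0l raddf0.
rewrite mulrDr !apolarDl IHp -scalerAr -mpolyXD !apolarZl !apolarXl.
by rewrite mderivmD mderivmZ -mderivmDm addmC.
Qed.

Lemma apolarM g h G : apolar (g * h) G = apolar g (apolar h G).
Proof.
elim/mpolyind: g => [|c m p _ _ IHp]; first by rewrite mul0r !apolar0l.
by rewrite mulrDl !apolarDl IHp -scalerAl !apolarZl apolarXM apolarXl.
Qed.

End Apolarity.

Section Support.
Variables (K : fieldType) (n : nat).
Local Notation P := {mpoly K[n]}.
Implicit Types (p q g G : P) (B : pred 'I_n).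

Lemma supported_onP B p : supported_on B p <->
  (forall m, p@_m != 0 -> forall i, ~~ B i -> m i = 0%N).
Proof.
split=> [/allP supp m pm i Bi | supp].
  by have /forallP/(_ i) := supp m (etrans (mcoeff_msupp _ _) pm); rewrite Bi => /eqP.
apply/allP => m; rewrite mcoeff_msupp => pm; apply/forallP => i.
by apply/implyP => Bi; rewrite (supp m pm i Bi).
Qed.

Lemma supported_on0 B : supported_on B (0 : P).
Proof. by apply/supported_onP => m; rewrite mcoeff0 eqxx. Qed.

Lemma supported_onD B p q :
  supported_on B p -> supported_on B q -> supported_on B (p + q).
Proof.
move=> /supported_onP sp /supported_onP sq; apply/supported_onP => m.
rewrite mcoeffD; have [p0|/sp//] := eqVneq p@_m 0.
by rewrite p0 add0r => /sq.
Qed.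

Lemma supported_onZ B c p : supported_on B p -> supported_on B (c *: p).
Proof.
move=> /supported_onP sp; apply/supported_onP => m.
by rewrite mcoeffZ mulf_eq0 negb_or => /andP[_ /sp].
Qed.

Lemma supported_onN B p : supported_on B p -> supported_on B (- p).
Proof. by rewrite -scaleN1r; apply: supported_onZ. Qed.

Lemma supported_onB B p q :
  supported_on B p -> supported_on B q -> supported_on B (p - q).
Proof. by move=> sp /supported_onN; apply: supported_onD. Qed.

Lemma supported_on_apolar B g G : supported_on B G -> supported_on B (apolar g G).
Proof.
move=> /supported_onP sG; apply/supported_onP => k + i Bi; apply: contraNeq => ki.
rewrite /apolar raddf_sum big1 //= => m _; rewrite mcoeffZ mcoeff_mderivm.
have [->|/sG/(_ i Bi)] := eqVneq G@_(m + k) 0; first by rewrite mul0rn mulr0.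
by move/eqP; rewrite mnmDE addn_eq0 (negbTE ki) andbF.
Qed.

Lemma apolar_eq0 B g G :
  (forall m, g@_m != 0 -> exists2 i, ~~ B i & (0 < m i)%N) ->
  supported_on B G -> apolar g G = 0.
Proof.
move=> gB /supported_onP sG; rewrite /apolar big_seq big1 // => m.
rewrite mcoeff_msupp => /gB[i Bi mi]; apply/mpolyP => k.
rewrite mcoeffZ mcoeff_mderivm mcoeff0.
have [->|/sG/(_ i Bi)] := eqVneq G@_(m + k) 0; first by rewrite mul0rn mulr0.
by move/eqP; rewrite mnmDE addn_eq0 eqn0Ngt mi.
Qed.

Lemma supported_on_disjoint B B' p :
  (forall i, ~~ B i || ~~ B' i) ->
  supported_on B p -> supported_on B' p -> p = (p@_0)%:MP.
Proof.
move=> BB' /supported_onP sB /supported_onP sB'; apply/mpolyP => m.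
rewrite mcoeffC; have [->|m0] := eqVneq m 0%MM; first by rewrite mulr1.
rewrite mulr0; apply: contraNeq m0 => pm; apply/eqP/mnmP => i; rewrite mnm0E.
by case/orP: (BB' i) => [/(sB _ pm)|/(sB' _ pm)].
Qed.

Lemma supported_on_coef0 B p m : supported_on B p -> p@_0 = 0 ->
  p@_m != 0 -> exists2 i, B i & (0 < m i)%N.
Proof.
move=> /supported_onP sp p0 pm; have [i mi|m0] := pickP (fun i => 0 < m i)%N.
  by exists i; rewrite // -[B i]negbK; apply: contraTN mi => /(sp _ pm) ->.
suff /eqP m_eq0 : m == 0%MM by rewrite m_eq0 p0 eqxx in pm.
by apply/eqP/mnmP => i; rewrite mnm0E; move: (m0 i) => /= /negbT; rewrite -leqNgt leqn0 => /eqP.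
Qed.

Lemma apolar_supported_eq0 B B' g G : (forall i, B' i -> ~~ B i) ->
  supported_on B' g -> g@_0 = 0 -> supported_on B G -> apolar g G = 0.
Proof.
move=> BB' g_on g0 G_on; apply: (apolar_eq0 _ G_on) => m.
by case/(supported_on_coef0 g_on g0) => i /BB'; exists i.
Qed.

Lemma dhomog_coefP d p : p \is d.-homog <-> (forall m, p@_m != 0 -> mdeg m = d).
Proof.
split=> [/dhomogP pd m | pd]; first by rewrite -mcoeff_msupp; apply: pd.
by apply/dhomogP => m; rewrite mcoeff_msupp; apply: pd.
Qed.

Lemma dhomog_coef0 e p : (0 < e)%N -> p \is e.-homog -> p@_0 = 0.
Proof.
move=> e_gt0 /dhomog_coefP pe; apply: contraTeq e_gt0 => /pe <-.
by rewrite mdeg0.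
Qed.

Lemma lin_forms_coef0 B (l : P) : lin_forms_on B l -> l@_0 = 0.
Proof. by case=> /(dhomog_coef0 (ltn0Sn 0)) ->. Qed.

Lemma dhomog0_const p : p \is 0.-homog -> p = (p@_0)%:MP.
Proof.
move=> /dhomog_coefP p0; apply/mpolyP => m; rewrite mcoeffC.
have [->|m0] := eqVneq m 0%MM; first by rewrite mulr1.
by rewrite mulr0; apply: contraNeq m0 => /p0/eqP; rewrite mdeg_eq0.
Qed.

Lemma apolar_dhomog e k g G : g \is e.-homog -> G \is k.-homog ->
  apolar g G \is (k - e)%N.-homog.
Proof.
move=> /dhomog_coefP ge /dhomog_coefP Gk; apply/dhomog_coefP => m'.
apply: contraNeq => m'k; rewrite /apolar raddf_sum big_seq big1 //= => m.
rewrite mcoeff_msupp => /ge me; rewrite mcoeffZ mcoeff_mderivm.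
have [->|/Gk] := eqVneq G@_(m + m') 0; first by rewrite mul0rn mulr0.
by rewrite mdegD me => k_eq; rewrite -k_eq addKn eqxx in m'k.
Qed.

End Support.

Section Projection.
Variables (K : fieldType) (n : nat).
Local Notation P := {mpoly K[n]}.
Implicit Types (p q : P) (B : pred 'I_n).

Definition mnm_on B (m : 'X_{1..n}) := [forall i, ~~ B i ==> (m i == 0%N)].

Definition mproj B : P -> P := mmap (@mpolyC n K) (fun i => if B i then 'X_i else 0).

Lemma mmap1_mproj B m :
  mmap1 (fun i => if B i then ('X_i : P) else 0) m = if mnm_on B m then 'X_[m] else 0.
Proof.
rewrite /mmap1 mpolyXE_id; case: ifP => [/forallP Bm | /negbT].
  apply: eq_bigr => i _; case: ifP => // Bi.
  by move: (Bm i); rewrite Bi => /eqP ->; rewrite !expr0.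
rewrite negb_forall; case/existsP => i; rewrite negb_imply => /andP[Bi mi].
by rewrite (bigD1 i) //= (negbTE Bi) expr0n (negbTE mi) mul0r.
Qed.

Lemma mproj_coef B p m : (mproj B p)@_m = if mnm_on B m then p@_m else 0.
Proof.
rewrite {2}[p]mpolyE /mproj /mmap !raddf_sum /=.
have coefX m' : ('X_[m'] : P)@_m = (m' == m)%:R by rewrite mcoeffX.
case: ifP => Bm; [apply: eq_bigr | apply: big1] => m' _;
  rewrite mmap1_mproj mul_mpolyC; case: ifP => Bm'; rewrite ?scaler0 ?mcoeff0 //;
  by rewrite mcoeffZ coefX; case: eqP Bm' => [->|]; rewrite ?Bm ?mulr0.
Qed.

Lemma mprojB B : {morph mproj B : p q / p - q}.
Proof. exact: raddfB. Qed.

Lemma mproj_sum B (I : Type) (r : seq I) (F : I -> P) :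
  mproj B (\sum_(i <- r) F i) = \sum_(i <- r) mproj B (F i).
Proof. exact: raddf_sum. Qed.

Lemma mprojM B : {morph mproj B : p q / p * q}.
Proof. exact: rmorphM. Qed.

Lemma mprojZ B c p : mproj B (c *: p) = c *: mproj B p.
Proof. by rewrite /mproj mmapZ mul_mpolyC. Qed.

Lemma mproj_supported B p : supported_on B (mproj B p).
Proof.
apply/supported_onP => m; rewrite mproj_coef; case: ifP => [/forallP Bm _ i Bi|].
  by apply/eqP; move: (Bm i); rewrite Bi.
by rewrite eqxx.
Qed.

Lemma mproj_id B p : supported_on B p -> mproj B p = p.
Proof.
move=> /supported_onP sp; apply/mpolyP => m; rewrite mproj_coef.
case: ifP => // /negbT; have [->//|/sp pm] := eqVneq p@_m 0.
rewrite negb_forall; case/existsP => i; rewrite negb_imply => /andP[Bi].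
by rewrite (pm i Bi) eqxx.
Qed.

Lemma mproj_eq0 B p :
  (forall m, p@_m != 0 -> exists2 i, ~~ B i & (0 < m i)%N) -> mproj B p = 0.
Proof.
move=> pB; apply/mpolyP => m; rewrite mproj_coef mcoeff0; case: ifP => // /forallP Bm.
apply: contraTeq isT => /pB[i Bi]; move: (Bm i); rewrite Bi => /eqP ->.
by rewrite ltnn.
Qed.

Lemma mproj_compl_coef B p m :
  (p - mproj B p)@_m != 0 -> exists2 i, ~~ B i & (0 < m i)%N.
Proof.
rewrite mcoeffB mproj_coef; case: ifP => [_|/negbT]; first by rewrite subrr eqxx.
rewrite negb_forall; case/existsP => i; rewrite negb_imply -lt0n => /andP[Bi mi] _.
by exists i.
Qed.

End Projection.

Notation ideal := (ideal_in (fun _ => True)).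

Section Ideals.
Variables (K : fieldType) (n : nat).
Local Notation P := {mpoly K[n]}.
Implicit Types (R S : P -> Prop) (p q : P).

Lemma ideal_in0 R S : ideal_in R S 0.
Proof. by exists [::]; rewrite big_nil. Qed.

Lemma ideal_inD R S p q : ideal_in R S p -> ideal_in R S q -> ideal_in R S (p + q).
Proof.
move=> [s [Rs ->]] [t [Rt ->]]; exists (s ++ t); rewrite big_cat; split=> // x.
by rewrite mem_cat => /orP[/Rs|/Rt].
Qed.

Lemma ideal_in_sum R S (I : eqType) (r : seq I) (F : I -> P) :
  (forall i, i \in r -> ideal_in R S (F i)) -> ideal_in R S (\sum_(i <- r) F i).
Proof.
elim: r => [|x r IHr] IF; first by rewrite big_nil; apply: ideal_in0.
rewrite big_cons; apply: ideal_inD; first exact/IF/mem_head.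
by apply: IHr => i ir; apply: IF; rewrite in_cons ir orbT.
Qed.

Lemma ideal_in_sub R S (S' : P -> Prop) p :
  (forall x, S x -> S' x) -> ideal_in R S p -> ideal_in R S' p.
Proof. by move=> SS' [s [Rs ->]]; exists s; split=> // x /Rs[? /SS']. Qed.

Lemma ideal_in_gen R S x : R 1 -> S x -> ideal_in R S x.
Proof. by exists [:: (1, x)]; rewrite big_seq1 mul1r; split=> // y /[!inE] /eqP ->. Qed.

Lemma idealM S y p : ideal S p -> ideal S (y * p).
Proof.
move=> [s [Ss ->]]; exists [seq (y * x.1, x.2) | x <- s]; split.
  by move=> _ /mapP[x /Ss[_ Sx] ->].
by rewrite big_map mulr_sumr; apply: eq_bigr => x _; rewrite mulrA.
Qed.

Lemma idealZ S c p : ideal S p -> ideal S (c *: p).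
Proof. by rewrite -mul_mpolyC; apply: idealM. Qed.

Lemma idealB S p q : ideal S p -> ideal S q -> ideal S (p - q).
Proof. by move=> Sp /(idealZ (-1)); rewrite scaleN1r; apply: ideal_inD. Qed.

Lemma ideal_lin_forms (B : pred 'I_n) q :
  (forall m, q@_m != 0 -> exists2 i, B i & (0 < m i)%N) -> ideal (lin_forms_on B) q.
Proof.
move=> qB; rewrite [q]mpolyE; apply: ideal_in_sum => m; rewrite mcoeff_msupp.
case/qB/sig2W => i Bi mi; rewrite -(submK (m := U_(i)%MM) (m' := m)); last first.
  by apply/mnm_lepP => j; rewrite mnm1E; case: eqP => [<-|].
rewrite mpolyXD scalerAl; apply/idealM/ideal_in_gen => //; split.
  by rewrite dhomogX /= mdeg1.
apply/supported_onP => k; rewrite mcoeffX.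
have [<- _ j|_] := eqVneq U_(i)%MM k; last by rewrite eqxx.
by rewrite mnm1E; case: eqP => // <-; rewrite Bi.
Qed.

Lemma apolar_ideal_eq0 (G x h : P) p : apolar (x * h) G = 0 ->
  ideal (ideal_add (perp_in (fun _ => True) G) (eq x)) p -> apolar (p * h) G = 0.
Proof.
move=> xh [s [Ss ->]]; rewrite mulr_suml apolar_suml big_seq big1 // => y.
case/Ss => _ [[_ yG]|<-]; first by rewrite mulrAC apolarM yG apolar0r.
by rewrite -mulrA apolarM xh apolar0r.
Qed.

End Ideals.

Section FreeModulo.
Variables (K : pzRingType) (V : lmodType K).
Implicit Types (I : V -> Prop) (c d : seq K) (s t : seq V).

Definition lcomb c s : V := \sum_(a <- zip c s) a.1 *: a.2.

Definition free_mod I s :=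
  forall c, size c = size s -> I (lcomb c s) -> all (pred1 0) c.

Lemma lcomb_cons a c x s : lcomb (a :: c) (x :: s) = a *: x + lcomb c s.
Proof. by rewrite /lcomb big_cons. Qed.

Lemma lcomb_cat c c' s s' :
  size c = size s -> lcomb (c ++ c') (s ++ s') = lcomb c s + lcomb c' s'.
Proof. by move=> cs; rewrite /lcomb zip_cat // big_cat. Qed.

Lemma lcomb_closed (S : V -> Prop) c s : S 0 ->
  (forall a x y, x \in s -> S y -> S (a *: x + y)) -> S (lcomb c s).
Proof.
move=> S0 Sadd; elim: s c Sadd => [|x s IHs] [|a c] Sadd; rewrite /lcomb //= ?big_nil //.
rewrite big_cons; apply: (Sadd); first exact: mem_head.
by apply: IHs => b y z ys; apply: Sadd; rewrite in_cons ys orbT.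
Qed.

Lemma lcomb_eq0 c s : all (pred1 0) c -> lcomb c s = 0.
Proof.
elim: c s => [|a c IHc] [|x s] //= => [_|_|_|/andP[/eqP-> c0]];
  try by rewrite /lcomb big_nil.
by rewrite lcomb_cons IHc // scale0r addr0.
Qed.

Lemma lcomb_rot k c s : size c = size s -> lcomb (rot k c) (rot k s) = lcomb c s.
Proof.
move=> cs; rewrite /rot lcomb_cat ?size_drop ?cs // addrC -lcomb_cat ?size_take ?cs //.
by rewrite !cat_take_drop.
Qed.

Lemma lcomb_map c s x (f : V -> K) :
  lcomb c [seq y - f y *: x | y <- s] =
  lcomb (- \sum_(a <- zip c s) a.1 * f a.2 :: c) (x :: s).
Proof.
rewrite lcomb_cons scaleNr scaler_suml addrC.
elim: s c => [|y s IHs] [|a c]; try by rewrite /lcomb /= !big_nil subrr.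
by rewrite /= !lcomb_cons big_cons IHs scalerBr scalerA opprD addrACA.
Qed.

Lemma free_mod_cat I (I' : V -> Prop) s t : free_mod I' s -> free_mod I t ->
  (forall c d, I (lcomb c s + lcomb d t) -> I' (lcomb c s)) -> free_mod I (s ++ t).
Proof.
move=> fs ft sep c; rewrite size_cat => cst.
have c1s : size (take (size s) c) = size s by rewrite size_takel // cst leq_addr.
rewrite -(cat_take_drop (size s) c) lcomb_cat // all_cat => Ic.
have c1 : all (pred1 0) (take (size s) c) by apply/fs/(sep _ _ Ic).
rewrite c1 (lcomb_eq0 _ c1) add0r in Ic *; apply: ft Ic.
by rewrite size_drop cst addKn.
Qed.

Lemma free_mod_prefix I s t : free_mod I (s ++ t) -> free_mod I s.
Proof.
move=> fst c cs Ic; have := fst (c ++ nseq (size t) 0).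
rewrite lcomb_cat // (lcomb_eq0 _ (all_pred1_nseq _ _)) addr0 all_cat !size_cat.
by rewrite cs size_nseq => /(_ erefl Ic)/andP[].
Qed.

Lemma free_mod_rot I k s : free_mod I s -> free_mod I (rot k s).
Proof.
move=> fs c; rewrite size_rot => cs Ic.
have /perm_all <- : perm_eq (rotr k c) c by rewrite perm_rotr.
apply: fs; first by rewrite size_rotr.
by rewrite -(lcomb_rot k) ?size_rotr // rotrK.
Qed.

Lemma free_mod_pivot I x s (f : V -> K) :
  free_mod I (x :: s) -> free_mod I [seq y - f y *: x | y <- s].
Proof.
move=> fxs c; rewrite size_map lcomb_map => cs Ic.
by have /andP[] := fxs _ (congr1 succn cs : size (_ :: c) = _) Ic.
Qed.

Lemma free_mod1 I x : (forall a, I (a *: x) -> a = 0) -> free_mod I [:: x].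
Proof.
move=> Ix [|a [|b c]] //= _; rewrite lcomb_cons /lcomb big_nil addr0.
by move=> /Ix ->; rewrite eqxx.
Qed.

End FreeModulo.

Section Codimension.
Variables (K : fieldType) (n : nat).
Local Notation P := {mpoly K[n]}.
Implicit Types (R I : P -> Prop).

Lemma codim_geP R I k : codim_ge R I k <->
  exists s, [/\ size s = k, forall x, x \in s -> R x & free_mod I s].
Proof.
have sumE c (s : seq P) : size c = size s ->
    \sum_(j < size s) c`_j *: s`_j = lcomb c s.
  move=> cs; rewrite /lcomb (big_nth (0, 0)) size_zip cs minnn big_mkord.
  by apply: eq_bigr => j _; rewrite nth_zip.
have allE (c : seq K) : all (pred1 0) c <-> forall j, c`_j = 0.
  split=> [/all_nthP c0 j | c0]; last by apply/(all_nthP 0) => j _; rewrite /= c0.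
  by have [/(c0 0)/eqP//|jc] := ltnP j (size c); rewrite nth_default.
split=> [[s [sk [Rs fs]]] | [s [sk Rs fs]]]; exists s.
  by split=> // c cs Ic; apply/allE/fs; rewrite -sk ?sumE.
split=> //; split=> // c ck; rewrite -sk sumE ?ck // => Ic.
by apply/allE/fs; rewrite ?ck.
Qed.

Lemma codim_ge_leq R I j k : (j <= k)%N -> codim_ge R I k -> codim_ge R I j.
Proof.
move=> jk /codim_geP[s [sk Rs fs]]; apply/codim_geP; exists (take j s); split.
- by rewrite size_takel // sk.
- by move=> x /mem_take/Rs.
- by apply: (@free_mod_prefix _ _ _ _ (drop j s)); rewrite cat_take_drop.
Qed.

Lemma supported_on_lcomb B c (s : seq P) :
  (forall x, x \in s -> supported_on B x) -> supported_on B (lcomb c s).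
Proof.
move=> s_on; apply: (@lcomb_closed _ _ (fun p => supported_on B p)).
  exact: supported_on0.
by move=> a x y /s_on x_on y_on; apply/supported_onD/y_on/supported_onZ.
Qed.

Lemma ideal_lcomb S c (s : seq P) : (forall x, x \in s -> ideal S x) -> ideal S (lcomb c s).
Proof.
move=> sS; apply: (@lcomb_closed _ _ (ideal S)); first exact: ideal_in0.
by move=> a x y /sS Sx Sy; apply/ideal_inD/Sy/idealZ.
Qed.

(* Eliminating the constant terms against a pivot costs at most one vector. *)
Lemma free_mod_const_free B I s : (forall x, x \in s -> supported_on B x) ->
  free_mod I s -> exists t, [/\ size t = (size s).-1,
    forall x, x \in t -> supported_on B x /\ x@_0 = 0 & free_mod I t].
Proof.
case: s => [|y s'] s_on fs; first by exists [::]; split=> // -[].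
set s := y :: s' in s_on fs *.
have [x xs x_piv] : exists2 x, x \in s & x@_0 = 0 -> forall z, z \in s -> z@_0 = 0.
  have [/hasP[x xs x0]|/hasPn s0] := boolP (has (fun z => z@_0 != 0) s).
    by exists x => // x0'; rewrite x0' eqxx in x0.
  by exists y => [|_ z /s0/negPn/eqP]; rewrite ?mem_head.
have [i s'' rot_s] := rot_to xs.
have s''s z : z \in s'' -> z \in s by rewrite -(mem_rot i s) rot_s in_cons orbC => ->.
exists [seq z - (z@_0 / x@_0) *: x | z <- s'']; split.
- by rewrite size_map -(size_rot i s) rot_s.
- move=> _ /mapP[z /s''s zs ->]; split.
    by apply: supported_onB; rewrite ?supported_onZ ?s_on.
  rewrite mcoeffB mcoeffZ; have [x0|x0] := eqVneq x@_0 0.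
    by rewrite (x_piv x0 z zs) x0 mulr0 subr0.
  by rewrite divfK // subrr.
- by apply: free_mod_pivot; rewrite -rot_s; apply: free_mod_rot.
Qed.

End Codimension.

Section Block.
Variables (K : numFieldType) (n : nat) (B B' : pred 'I_n).
Hypothesis BC : forall i, B' i = ~~ B i.
Local Notation P := {mpoly K[n]}.
Local Notation T_B := (fun p : P => supported_on B p).
Variables (d : nat) (G G' u u' : P).
Hypothesis d_ge2 : (2 <= d)%N.
Hypotheses (G_homog : G \is d.-homog) (G_on : supported_on B G).
Hypothesis G'_on : supported_on B' G'.
Hypotheses (u_lin : lin_forms_on B u) (u'_lin : lin_forms_on B' u').
Hypothesis u_nperp : apolar u G != 0.

Local Notation KB :=
  (ideal (ideal_add (ideal_add (perp_in T_B G) (eq u)) (lin_forms_on B'))).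
Local Notation JB := (ideal_in T_B (ideal_add (perp_in T_B G) (eq u))).
Local Notation J :=
  (ideal (ideal_add (perp_in (fun _ => True) (G + G')) (eq (u + u')))).

Lemma B'_notB i : B' i -> ~~ B i.
Proof. by rewrite BC. Qed.

Lemma B_notB' i : B i -> ~~ B' i.
Proof. by rewrite BC negbK. Qed.

(* [h] is a monomial of [u . G]: differentiating by it leaves a nonzero
   constant, as the characteristic is 0. *)
Lemma exists_apolar_const : exists h c,
  [/\ supported_on B h, h@_0 = 0, c != 0 & apolar (u * h) G = c%:MP].
Proof.
pose a := apolar u G.
have a_homog : a \is (d - 1)%N.-homog by apply: apolar_dhomog (u_lin.1) G_homog.
have a_on : supported_on B a by apply: supported_on_apolar.
have [m am] : exists m, a@_m != 0.
  move: u_nperp; rewrite -/a -msupp_eq0.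
  by case E: (msupp a) => [|m s] // _; exists m; rewrite -mcoeff_msupp E mem_head.
have m_deg : mdeg m = (d - 1)%N by move/dhomog_coefP: a_homog; apply.
have m_neq0 : m != 0%MM by rewrite -mdeg_eq0 m_deg subn_eq0 -ltnNge.
exists 'X_[m], (a^`M[m])@_0; split.
- apply/supported_onP => k; rewrite mcoeffX; have [<- _|] := eqVneq m k.
    by move/supported_onP: a_on; apply.
  by rewrite eqxx.
- by rewrite mcoeffX (negbTE m_neq0).
- rewrite mcoeff_mderivm addm0 mulrn_eq0 negb_or am andbT -lt0n.
  by apply: prodn_gt0 => i; rewrite ffactnn fact_gt0.
rewrite mulrC apolarM apolarXl; apply: dhomog0_const.
have := apolar_dhomog (_ : 'X_[m] \is (d - 1)%N.-homog) a_homog.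
by rewrite subnn apolarXl; apply; rewrite dhomogX /= m_deg.
Qed.

Lemma KB_u : KB u.
Proof. by apply: ideal_in_gen => //; left; right. Qed.

Lemma KB_outside q : (forall m, q@_m != 0 -> exists2 i, B' i & (0 < m i)%N) -> KB q.
Proof.
move=> qB'; apply: (@ideal_in_sub _ _ _ (lin_forms_on B')) => [x|]; first by right.
exact: ideal_lin_forms.
Qed.

Lemma KB_const_free q : supported_on B' q -> q@_0 = 0 -> KB q.
Proof. by move=> q_on q0; apply: KB_outside => m; apply: supported_on_coef0. Qed.

Lemma perp_sub_KB g : apolar g (G + G') = 0 -> KB g.
Proof.
move=> gF; set r := g - mproj B g.
have r_out m : r@_m != 0 -> exists2 i, ~~ B i & (0 < m i)%N by apply: mproj_compl_coef.
have r_in : KB r by apply: KB_outside => m /r_out[i Bi mi]; exists i; rewrite ?BC.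
have gG : apolar (mproj B g) G = apolar g G.
  by rewrite -[in RHS](subrK (mproj B g) g) apolarDl (apolar_eq0 r_out G_on) add0r.
have [c gc] : exists c, apolar g G = c%:MP.
  exists (apolar g G)@_0; apply: (@supported_on_disjoint _ _ B B').
  - by move=> i; rewrite BC negbK orNb.
  - exact: supported_on_apolar.
  move: gF; rewrite apolarDr => /eqP; rewrite addr_eq0 => /eqP ->.
  exact/supported_onN/supported_on_apolar.
have [h [c1 [h_on _ c1_neq0 uh]]] := exists_apolar_const.
pose q := mproj B (g - (c / c1) *: (u * h)).
have qE : q = mproj B g - (c / c1) *: (u * h).
  by rewrite /q mprojB mprojZ mprojM (mproj_id h_on) (mproj_id u_lin.2).
have qG : apolar q G = 0.
  rewrite qE apolarBl apolarZl gG gc uh -mul_mpolyC -rmorphM -rmorphB.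
  by rewrite divfK // subrr rmorph0.
have -> : g = q + (c / c1 *: h) * u + r.
  by rewrite qE -scalerAl [h * u]mulrC subrK /r addrC subrK.
apply: ideal_inD; first apply: ideal_inD.
- by apply: ideal_in_gen => //; do 2!left; split => //; apply: mproj_supported.
- exact/idealM/KB_u.
- exact: r_in.
Qed.

Lemma J_sub_KB p : J p -> KB p.
Proof.
case=> s [Ss ->]; apply: ideal_in_sum => x xs; apply: idealM.
case: (Ss x xs) => _ [[_ xF]|<-]; first exact: perp_sub_KB.
apply: ideal_inD; first exact: KB_u.
exact: KB_const_free (u'_lin.2) (lin_forms_coef0 u'_lin).
Qed.

Lemma KB_restrict p : supported_on B p -> KB p -> JB p.
Proof.
move=> p_on [s [Ss ps]]; exists [seq (mproj B x.1, mproj B x.2) | x <- s]; split.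
  move=> _ /mapP[x xs ->] /=; split; first exact: mproj_supported.
  case: (Ss x xs) => _ [[[x2_on x2G]|<-]|x2_lin].
  - by left; rewrite mproj_id.
  - by right; rewrite mproj_id //; case: u_lin.
  left; rewrite mproj_eq0; first by split; [apply: supported_on0 | apply: apolar0l].
  move=> m /(supported_on_coef0 x2_lin.2 (lin_forms_coef0 x2_lin))[i /B'_notB].
  by exists i.
by rewrite -(mproj_id p_on) ps mproj_sum big_map; apply: eq_bigr => x _; rewrite mprojM.
Qed.

Lemma J_restrict p q : supported_on B p -> KB q -> J (p + q) -> JB p.
Proof.
move=> p_on Kq /J_sub_KB Kpq; apply: KB_restrict => //.
by rewrite -(addrK q p); apply: idealB.
Qed.

Lemma apolar_mixed_eq0 g g' : supported_on B g -> g@_0 = 0 ->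
  supported_on B' g' -> g'@_0 = 0 -> apolar (g * g') (G + G') = 0.
Proof.
move=> g_on g0 g'_on g'0; rewrite apolarM apolarDr.
rewrite (apolar_supported_eq0 B'_notB g'_on g'0 G_on) add0r.
by apply: (apolar_supported_eq0 B_notB' g_on g0); apply: supported_on_apolar.
Qed.

End Block.

Section DirectSum.
Variables (K : numFieldType) (n1 n2 d : nat) (F1 F2 l1 l2 : {mpoly K[n1 + n2]}).
Local Notation P := {mpoly K[n1 + n2]}.
Local Notation B1 := (blk1 n1 n2).
Local Notation B2 := (blk2 n1 n2).
Local Notation T1 := (fun p : P => supported_on B1 p).
Local Notation T2 := (fun p : P => supported_on B2 p).
Hypothesis d_ge2 : (2 <= d)%N.
Hypotheses (F1_homog : F1 \is d.-homog) (F1_on : supported_on B1 F1).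
Hypotheses (F2_homog : F2 \is d.-homog) (F2_on : supported_on B2 F2).
Hypotheses (l1_lin : lin_forms_on B1 l1) (l2_lin : lin_forms_on B2 l2).
Hypotheses (l1_nperp : apolar l1 F1 != 0) (l2_nperp : apolar l2 F2 != 0).

Local Notation J :=
  (ideal (ideal_add (perp_in (fun _ => True) (F1 + F2)) (eq (l1 + l2)))).
Local Notation K1 :=
  (ideal (ideal_add (ideal_add (perp_in T1 F1) (eq l1)) (lin_forms_on B2))).
Local Notation K2 :=
  (ideal (ideal_add (ideal_add (perp_in T2 F2) (eq l2)) (lin_forms_on B1))).
Local Notation J1 := (ideal_in T1 (ideal_add (perp_in T1 F1) (eq l1))).
Local Notation J2 := (ideal_in T2 (ideal_add (perp_in T2 F2) (eq l2))).

Lemma blk2C i : B2 i = ~~ B1 i.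
Proof. by rewrite /blk1 /blk2 -leqNgt. Qed.

Lemma blk1C i : B1 i = ~~ B2 i.
Proof. by rewrite blk2C negbK. Qed.

Lemma J_sym p : J p ->
  ideal (ideal_add (perp_in (fun _ => True) (F2 + F1)) (eq (l2 + l1))) p.
Proof. by rewrite [F2 + F1]addrC [l2 + l1]addrC. Qed.

Lemma J_sub_K1 p : J p -> K1 p.
Proof. exact: (J_sub_KB blk2C d_ge2 F1_homog F1_on F2_on l1_lin l2_lin l1_nperp). Qed.

Lemma J_sub_K2 p : J p -> K2 p.
Proof.
by move/J_sym; apply: (J_sub_KB blk1C d_ge2 F2_homog F2_on F1_on l2_lin l1_lin l2_nperp).
Qed.

Lemma l1_in_K1 : K1 l1.
Proof. exact: KB_u. Qed.

Lemma l1_in_K2 : K2 l1.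
Proof. by apply: ideal_in_gen => //; right. Qed.

Lemma l1_notin_J : ~ J l1.
Proof.
have [h1 [c1 [h1_on h1_0 c1_neq0 l1h1]]] :=
  exists_apolar_const d_ge2 F1_homog F1_on l1_lin l1_nperp.
have [h2 [c2 [h2_on h2_0 c2_neq0 l2h2]]] :=
  exists_apolar_const d_ge2 F2_homog F2_on l2_lin l2_nperp.
have l1_0 := lin_forms_coef0 l1_lin; have l2_0 := lin_forms_coef0 l2_lin.
have h1F2 : apolar h1 F2 = 0 by apply: (apolar_supported_eq0 (B'_notB blk1C)).
have h2F1 : apolar h2 F1 = 0 by apply: (apolar_supported_eq0 (B'_notB blk2C)).
have l1h2 : apolar (l1 * h2) (F1 + F2) = 0.
  exact: (apolar_mixed_eq0 blk2C F1_on F2_on l1_lin.2 l1_0 h2_on h2_0).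
have l2h1 : apolar (l2 * h1) (F1 + F2) = 0.
  by rewrite mulrC; apply: (apolar_mixed_eq0 blk2C F1_on F2_on h1_on h1_0 l2_lin.2 l2_0).
pose h := h1 - (c1 / c2) *: h2.
have l1h : apolar (l1 * h) (F1 + F2) = c1%:MP.
  rewrite mulrBr -scalerAr apolarBl apolarZl l1h2 scaler0 subr0.
  by rewrite apolarDr l1h1 apolarM h1F2 apolar0r addr0.
have l2h : apolar (l2 * h) (F1 + F2) = - c1%:MP.
  rewrite mulrBr -scalerAr apolarBl apolarZl l2h1 sub0r apolarDr l2h2.
  by rewrite apolarM h2F1 apolar0r add0r -mul_mpolyC -rmorphM divfK.
have Jh : apolar ((l1 + l2) * h) (F1 + F2) = 0 by rewrite mulrDl apolarDl l1h l2h subrr.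
move=> /(apolar_ideal_eq0 Jh)/eqP; rewrite l1h mpolyC_eq0.
exact/negP.
Qed.

Lemma codim_ge_add a1 a2 : codim_ge T1 J1 a1 -> codim_ge T2 J2 a2 ->
  codim_ge (fun _ => True) J (a1 + a2).
Proof.
move=> /codim_geP[s [<- s_on s_free]] /codim_geP[t0 [<- t0_on t0_free]].
have [t [t_size t_cf t_free]] := free_mod_const_free t0_on t0_free.
apply: (@codim_ge_leq _ _ _ _ _ (size s + size (t ++ [:: l1]))).
  by rewrite leq_add2l size_cat t_size addn1 leqSpred.
apply/codim_geP; exists (s ++ (t ++ [:: l1])); split=> //; first by rewrite size_cat.
have l1_free : free_mod J [:: l1].
  apply: free_mod1 => a Ja; have [//|a_neq0] := eqVneq a 0.
  by case: l1_notin_J; have := idealZ a^-1 Ja; rewrite scalerA mulVf ?scale1r.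
have tl1_free : free_mod J (t ++ [:: l1]).
  apply: (free_mod_cat t_free l1_free) => c e /J_sym Jce.
  apply: (J_restrict blk1C d_ge2 F2_homog F2_on F1_on l2_lin l1_lin l2_nperp _ _ Jce).
    by apply: supported_on_lcomb => x /t_cf[].
  by apply: ideal_lcomb => x; rewrite mem_seq1 => /eqP->; apply: l1_in_K2.
apply: (free_mod_cat s_free tl1_free) => c e Jce.
apply: (J_restrict blk2C d_ge2 F1_homog F1_on F2_on l1_lin l2_lin l1_nperp _ _ Jce).
  exact: supported_on_lcomb.
apply: ideal_lcomb => x; rewrite mem_cat mem_seq1 => /orP[/t_cf[]|/eqP->].
  exact: KB_const_free.
exact: l1_in_K1.
Qed.

End DirectSum.

Theorem mainTheorem3 (R : realType) (n1 n2 d : nat)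
  (F1 F2 l1 l2 : {mpoly (complex R)[n1 + n2]}) :
  let T : {mpoly (complex R)[n1 + n2]} -> Prop := fun _ => True in
  let T1 := fun p => supported_on (blk1 n1 n2) p in
  let T2 := fun p => supported_on (blk2 n1 n2) p in
  let F := F1 + F2 in
  (2 <= d)%N ->
  F1 \is d.-homog -> supported_on (blk1 n1 n2) F1 ->
  F2 \is d.-homog -> supported_on (blk2 n1 n2) F2 ->
  lin_forms_on (blk1 n1 n2) l1 -> lin_forms_on (blk2 n1 n2) l2 ->
  ~ perp_in T1 F1 l1 -> ~ perp_in T2 F2 l2 ->
  let J := ideal_in T (ideal_add (perp_in T F) (eq (l1 + l2))) in
  let K1 := ideal_in T (ideal_add (ideal_add (perp_in T1 F1) (eq l1))
                                  (lin_forms_on (blk2 n1 n2))) in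
  let K2 := ideal_in T (ideal_add (ideal_add (perp_in T2 F2) (eq l2))
                                  (lin_forms_on (blk1 n1 n2))) in
  let J1 := ideal_in T1 (ideal_add (perp_in T1 F1) (eq l1)) in
  let J2 := ideal_in T2 (ideal_add (perp_in T2 F2) (eq l2)) in
  ((forall p, J p -> K1 p /\ K2 p) /\ exists p, K1 p /\ K2 p /\ ~ J p) /\
  (forall a1 a2, codim_ge T1 J1 a1 -> codim_ge T2 J2 a2 ->
     codim_ge T J (a1 + a2)).
Proof.
move=> T T1 T2 F d_ge2 F1_homog F1_on F2_homog F2_on l1_lin l2_lin l1_nperp l2_nperp.
have l1F1 : apolar l1 F1 != 0 by apply/eqP => l1F1; apply: l1_nperp; split=> //; case: l1_lin.
have l2F2 : apolar l2 F2 != 0 by apply/eqP => l2F2; apply: l2_nperp; split=> //; case: l2_lin.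
move=> J K1 K2 J1 J2; split; first split.
- move=> p Jp; split.
    exact: (J_sub_K1 d_ge2 F1_homog F1_on F2_on l1_lin l2_lin l1F1 Jp).
  exact: (J_sub_K2 d_ge2 F1_on F2_homog F2_on l1_lin l2_lin l2F2 Jp).
- exists l1; split; first exact: l1_in_K1.
  split; first exact: l1_in_K2.
  exact: (l1_notin_J d_ge2 F1_homog F1_on F2_homog F2_on l1_lin l2_lin l1F1 l2F2).
- exact: (codim_ge_add d_ge2 F1_homog F1_on F2_homog F2_on l1_lin l2_lin l1F1 l2F2).
Qed.
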